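(* Let $n\ge 3$. If $\mu$ is a symmetric measure on $L_n$ such that $C_\mu=C_{L_n}$, then $M_1(\mu)=C^0_\mu=C_{L_n}$.
   Context: $L_n$ is the path graph with vertices $\{1,\dots,n\}$ and edges $\{j,j+1\}$, with distance $|i-j|$. A measure on $L_n$ is a weight function $\mu:\{1,\dots,n\}\to(0,\infty)$, $\mu(A)=\sum_{v\in A}\mu(v)$; it is symmetric if $\mu(j)=\mu(n+1-j)$ for all $j$. Closed balls: $B(x,r)=\{y:|x-y|\le r\}$. $C_\mu=\sup\{\mu(B(x,2k+1))/\mu(B(x,k)):1\le x\le n,\ k\ge0\}$, $C_{L_n}=\inf_\mu C_\mu$, $C^0_\mu=\max_x\mu(B(x,1))/\mu(x)$, and $M_1(\mu)=\sup\{\mu(B(1,2k+1))/\mu(B(1,k)): k\in\mathbb Z,\ 0\le k<\lceil\frac{n-2}{3}\rceil\}$. *)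

From mathcomp Require Import all_boot all_order all_algebra.
From mathcomp Require Import all_classical all_reals.
Set Implicit Arguments. Unset Strict Implicit. Unset Printing Implicit Defensive.
Import Order.TTheory GRing.Theory Num.Theory.
Local Open Scope ring_scope.
Local Open Scope classical_set_scope.

(* Path graph L_n: vertices 1..n, distance |i - j|.
   A measure is a function mu : nat -> R, only its values on 1..n matter. *)

Definition is_measure {R : realType} (n : nat) (mu : nat -> R) : Prop :=
  forall v : nat, (1 <= v <= n)%N -> 0 < mu v.

Definition is_symmetric {R : realType} (n : nat) (mu : nat -> R) : Prop :=
  forall j : nat, (1 <= j <= n)%N -> mu j = mu (n.+1 - j)%N.

Definition in_ball (n x r y : nat) : bool :=
  [&& (1 <= y <= n)%N, (y <= x + r)%N & (x <= y + r)%N].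

Definition mu_ball {R : realType} (n : nat) (mu : nat -> R) (x r : nat) : R :=
  \sum_(1 <= y < n.+1 | in_ball n x r y) mu y.

Definition C_mu {R : realType} (n : nat) (mu : nat -> R) : R :=
  sup [set c | exists x k : nat, (1 <= x <= n)%N /\
         c = mu_ball n mu x (2 * k + 1) / mu_ball n mu x k].

Definition C_Ln {R : realType} (n : nat) : R :=
  inf [set c | exists mu : nat -> R, is_measure n mu /\ c = C_mu n mu].

Definition C0_mu {R : realType} (n : nat) (mu : nat -> R) : R :=
  sup [set c | exists x : nat, (1 <= x <= n)%N /\ c = mu_ball n mu x 1 / mu x].

Definition ceil_div (a b : nat) : nat := ((a + b).-1 %/ b)%N.

Definition M1 {R : realType} (n : nat) (mu : nat -> R) : R :=
  sup [set c | exists k : nat, (k < ceil_div (n - 2) 3)%N /\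
         c = mu_ball n mu 1 (2 * k + 1) / mu_ball n mu 1 k].

From mathcomp Require Import all_boot all_order all_algebra.
From mathcomp Require Import all_classical all_reals.
From mathcomp Require Import zify ring lra.
Set Implicit Arguments. Unset Strict Implicit. Unset Printing Implicit Defensive.
Import Order.TTheory GRing.Theory Num.Theory.
Local Open Scope ring_scope.

(* Write C for C_{L_n}; the counting measure gives C <= 3 and the balls of radius 1 about
   1, 2, 3 give C >= 12/5 > 7/3.  The ratios defining C^0_mu and M_1(mu) are among those
   defining C_mu = C, so only C <= C^0_mu and C <= M_1(mu) need an argument, and both come
   from the optimality of mu: if some direction d makes every doubling ratio at (x, k),
   k < n, either strictly smaller than C or strictly decreasing along d, then mu + eps d
   has a smaller doubling constant for small eps > 0.
   If C^0_mu < C, all ratios with k = 0 are strict and d = counting measure works, since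
   its ratios with k >= 1 are at most 7/3.
   If M_1(mu) < C, the bound mu(B(x,1)) <= C mu(x) with C <= 3 makes mu concave; with the
   symmetry this makes every ratio with k >= 1 strict: balls reaching the end 1 are balls
   about 1, controlled by M_1, and the others have ratio at most 7/3 by the chord
   inequality for concave sequences.  At k = 0 the ratios at the ends are M_1-ratios, and
   d(y) = -y^2 has defect -2 - (3 - C) x^2 at every interior x. *)

Lemma finite_pos_lbound (R : realType) (e : nat -> R) (N : nat) :
  exists2 g : R, 0 < g & forall i, (i < N)%N -> 0 < e i -> g <= e i.
Proof.
elim: N => [|N [g g0 Hg]]; first by exists 1.
case: (ltP 0 (e N)) => eN.
  exists (Num.min g (e N)); first by rewrite lt_min g0.
  move=> i; rewrite ltnS leq_eqVlt => /orP[/eqP -> _ | iN ei].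
    by rewrite ge_min lexx orbT.
  by rewrite ge_min Hg.
exists g => // i; rewrite ltnS leq_eqVlt => /orP[/eqP -> | iN]; last exact: Hg.
by rewrite ltNge eN.
Qed.

Lemma finite_pos_lbound2 (R : realType) (e : nat -> nat -> R) (N M : nat) :
  exists2 g : R, 0 < g &
    forall i j, (i < N)%N -> (j < M)%N -> 0 < e i j -> g <= e i j.
Proof.
have [g g0 Hg] := finite_pos_lbound (fun p => e (p %/ M)%N (p %% M)%N) (N * M).
exists g => // i j iN jM; have := Hg (i * M + j)%N.
rewrite divnMDl ?modnMDl ?divn_small ?modn_small ?addn0; try lia.
by apply; nia.
Qed.

Lemma pos_small_mul (R : realType) (K a : R) : 0 <= K -> 0 < a ->
  exists2 e : R, 0 < e & e * K <= a.
Proof.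
move=> K0 a0; have K1 : 0 < K + 1 by lra.
exists (a / (K + 1)); first exact: divr_gt0.
by rewrite mulrAC ler_pdivrMr // ler_wpM2l ?ltW //; lra.
Qed.

Section Balls.
Variables (R : realType) (n : nat) (mu : nat -> R).

Definition mu_pt (y : nat) : R := if (1 <= y <= n)%N then mu y else 0.

(* For t = 0 this is twice the mass of x; for t >= x the truncated x - t is 0, off the path. *)
Definition mu_sphere (x t : nat) : R := mu_pt (x - t) + mu_pt (x + t).

Lemma mu_pt0 : mu_pt 0 = 0.
Proof. by []. Qed.

Lemma mu_ptE y : (1 <= y <= n)%N -> mu_pt y = mu y.
Proof. by rewrite /mu_pt => ->. Qed.

Lemma mu_pt_out y : (n < y)%N -> mu_pt y = 0.
Proof. by move=> ny; rewrite /mu_pt ifF //; lia. Qed.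

Lemma mu_ballE x r :
  mu_ball n mu x r = \sum_(1 <= y < n.+1) (if in_ball n x r y then mu y else 0).
Proof. by rewrite /mu_ball big_mkcond. Qed.

Lemma sum_mu_pt_eq (a : nat) :
  \sum_(1 <= y < n.+1) (if y == a then mu y else 0) = mu_pt a.
Proof. by rewrite -big_mkcond big_nat1_eq /mu_pt ltnS. Qed.

Lemma mu_ball0 x : mu_ball n mu x 0 = mu_pt x.
Proof.
rewrite mu_ballE -sum_mu_pt_eq; apply: eq_big_nat => y hy.
by rewrite /in_ball !addn0; case: ifP => h1; case: ifP => h2 //; lia.
Qed.

Lemma mu_ballS x r : mu_ball n mu x r.+1 = mu_ball n mu x r + mu_sphere x r.+1.
Proof.
rewrite /mu_sphere !mu_ballE -!sum_mu_pt_eq addrA -!big_split /=.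
apply: eq_big_nat => y hy; rewrite /in_ball.
by do 4 case: ifP => ?; rewrite ?addr0 ?add0r //; lia.
Qed.

Lemma mu_ball1 x : mu_ball n mu x 1 = mu_pt (x - 1) + mu_pt x + mu_pt x.+1.
Proof. by rewrite mu_ballS mu_ball0 /mu_sphere addn1; ring. Qed.

Lemma mu_ball_addn x k i : mu_ball n mu x (k + i) =
  mu_ball n mu x k + \sum_(k.+1 <= t < (k + i).+1) mu_sphere x t.
Proof.
elim: i => [|i IH]; first by rewrite addn0 big_geq ?addr0.
by rewrite addnS mu_ballS IH -addrA [in RHS]big_nat_recr // ltnS leq_addr.
Qed.

Lemma mu_ball_left x r : (1 <= x <= r.+1)%N ->
  mu_ball n mu x r = mu_ball n mu 1 (x + r - 1).
Proof.
move=> hx; apply: eq_bigl => y; rewrite /in_ball.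
by apply/idP/idP => /and3P [? ? ?]; apply/and3P; split; lia.
Qed.

Lemma mu_ball_from1S r : mu_ball n mu 1 r.+1 = mu_ball n mu 1 r + mu_pt r.+2.
Proof. by rewrite mu_ballS /mu_sphere subSS sub0n mu_pt0 add0r add1n. Qed.

Lemma mu_sphere_le_ball x k :
  (forall t, (t <= k)%N -> mu_sphere x k <= mu_sphere x t) ->
  (2 * k%:R + 1) * mu_sphere x k <= 2 * mu_ball n mu x k.
Proof.
move=> antitone; suff: forall j, (j <= k)%N ->
    (2 * j%:R + 1) * mu_sphere x k <= 2 * mu_ball n mu x j by apply.
elim=> [|j IH] jk.
  rewrite mulr0 add0r mul1r mu_ball0 (le_trans (antitone 0%N _)) //.
  by rewrite /mu_sphere subn0 addn0 -mulr2n mulr_natl.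
have := antitone _ jk; have := IH (ltnW jk).
rewrite mu_ballS -natr1; lra.
Qed.

Lemma mu_ball_total x r : (1 <= x <= n)%N -> (n <= r)%N ->
  mu_ball n mu x r = \sum_(1 <= y < n.+1) mu y.
Proof.
move=> hx hr; rewrite mu_ballE; apply: eq_big_nat => y hy.
by rewrite ifT //; apply/and3P; split; lia.
Qed.

Lemma mu_ball_norm x r : `|mu_ball n mu x r| <= \sum_(1 <= y < n.+1) `|mu y|.
Proof.
rewrite mu_ballE; apply: le_trans (ler_norm_sum _ _ _) _.
by apply: ler_sum => y _; case: ifP; rewrite ?normr0.
Qed.

End Balls.

Lemma mu_ball_lin (R : realType) n (mu d : nat -> R) (e : R) x r :
  mu_ball n (fun y => mu y + e * d y) x r = mu_ball n mu x r + e * mu_ball n d x r.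
Proof. by rewrite /mu_ball big_split /= big_distrr. Qed.

Lemma doubling_defect_le (R : realType) n (d : nat -> R) (C : R) x k : 0 <= C ->
  mu_ball n d x (2 * k + 1) - C * mu_ball n d x k
    <= (1 + C) * \sum_(1 <= y < n.+1) `|d y|.
Proof.
move=> C_ge0; have := mu_ball_norm n d x (2 * k + 1); have := mu_ball_norm n d x k.
by rewrite !ler_norml => /andP[? _] /andP[_ ?]; nra.
Qed.

Section Measure.
Variables (R : realType) (n : nat) (mu : nat -> R).
Hypothesis mu_gt0 : is_measure n mu.

Lemma mu_pt_ge0 y : 0 <= mu_pt n mu y.
Proof. by rewrite /mu_pt; case: ifP => // /mu_gt0/ltW. Qed.

Lemma mu_pt_gt0 y : (1 <= y <= n)%N -> 0 < mu_pt n mu y.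
Proof. by move=> hy; rewrite mu_ptE //; apply: mu_gt0. Qed.

Lemma mu_sphere_ge0 x t : 0 <= mu_sphere n mu x t.
Proof. by rewrite addr_ge0 ?mu_pt_ge0. Qed.

Lemma mu_ball_mono x r s : (r <= s)%N -> mu_ball n mu x r <= mu_ball n mu x s.
Proof.
move=> rs; rewrite -(subnKC rs) mu_ball_addn lerDl.
by apply: sumr_ge0 => t _; apply: mu_sphere_ge0.
Qed.

Lemma mu_ball_ge0 x r : 0 <= mu_ball n mu x r.
Proof. by apply: le_trans (mu_ball_mono x (leq0n r)); rewrite mu_ball0 mu_pt_ge0. Qed.

Lemma mu_ball_gt0 x r : (1 <= x <= n)%N -> 0 < mu_ball n mu x r.
Proof.
by move=> hx; apply: lt_le_trans (mu_ball_mono x (leq0n r)); rewrite mu_ball0 mu_pt_gt0.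
Qed.

Lemma mu_ball_le_total x r : (1 <= x <= n)%N ->
  mu_ball n mu x r <= \sum_(1 <= y < n.+1) mu y.
Proof.
move=> hx; rewrite -(mu_ball_total mu (r := maxn r n) hx) ?leq_maxr //.
by apply: mu_ball_mono; rewrite leq_maxl.
Qed.

Lemma measure_lbound : exists2 m : R, 0 < m & forall y, (1 <= y <= n)%N -> m <= mu y.
Proof.
have [m m0 Hm] := finite_pos_lbound mu n.+1.
by exists m => // y hy; apply: Hm; [lia | apply: mu_gt0].
Qed.

End Measure.

Lemma perturb_is_measure (R : realType) n (mu d : nat -> R) (m eps : R) :
  (forall y, (1 <= y <= n)%N -> m <= mu y) -> 0 <= eps ->
  eps * \sum_(1 <= y < n.+1) `|d y| < m -> is_measure n (fun y => mu y + eps * d y).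
Proof.
move=> mu_ge eps_ge0 eps_small y hy; have := mu_ge y hy.
have : `|d y| <= \sum_(1 <= y < n.+1) `|d y|.
  by rewrite -(mu_ptE d hy) -mu_ball0 mu_ball_norm.
rewrite ler_norml => /andP[dy _].
have : eps * - \sum_(1 <= y < n.+1) `|d y| <= eps * d y by apply: ler_wpM2l.
lra.
Qed.

Section Symmetric.
Variables (R : realType) (n : nat) (mu : nat -> R).
Hypothesis mu_sym : is_symmetric n mu.

Lemma mu_pt_reflect a : mu_pt n mu (n.+1 - a) = mu_pt n mu a.
Proof.
rewrite /mu_pt; case: ifP => h1; case: ifP => h2 //; try lia.
by rewrite [RHS]mu_sym.
Qed.

Lemma mu_pt_sym a b : (a + b = n.+1)%N -> mu_pt n mu a = mu_pt n mu b.
Proof. by move=> hab; rewrite -mu_pt_reflect -hab addKn. Qed.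

Lemma mu_ball_reflect x r : (1 <= x <= n)%N ->
  mu_ball n mu (n.+1 - x) r = mu_ball n mu x r.
Proof.
move=> hx; rewrite !mu_ballE big_nat_rev /=; apply: eq_big_nat => y hy.
rewrite add1n subSS /in_ball.
case: ifP => h1; case: ifP => h2 //; try lia.
by rewrite -mu_sym ?subKn //; lia.
Qed.

End Symmetric.

Section ConcaveSequence.
Variables (R : realType) (N : nat) (f : nat -> R).
Hypothesis f_concave : forall y, (y < N)%N -> f y + f y.+2 <= 2 * f y.+1.

Lemma concave_incr_antitone a b : (a <= b <= N)%N -> f b.+1 - f b <= f a.+1 - f a.
Proof.
elim: b => [|b IH] /andP[ab bN]; first by move: ab; rewrite leqn0 => /eqP ->.
move: ab; rewrite leq_eqVlt => /orP[/eqP -> // | ab].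
apply: le_trans (IH _); last by rewrite -ltnS ab ltnW.
by have := f_concave bN; lra.
Qed.

Hypothesis f0_ge0 : 0 <= f 0.

Lemma concave_incr_le a : (a <= N)%N -> a%:R * (f a.+1 - f a) <= f a.
Proof.
elim: a => [|a IH] aN; first by rewrite mul0r.
have := IH (ltnW aN); have := concave_incr_antitone (a := a) (b := a.+1).
rewrite leqnSn aN -natr1 => /(_ isT) incr.
have : a%:R * (f a.+2 - f a.+1) <= a%:R * (f a.+1 - f a) by rewrite ler_wpM2l ?ler0n.
lra.
Qed.

Lemma concave_chord_step a : (a <= N)%N -> a%:R * f a.+1 <= a.+1%:R * f a.
Proof. by move=> /concave_incr_le; rewrite -natr1; lra. Qed.

Lemma concave_chord a b : (0 < a <= b)%N -> (b <= N.+1)%N -> a%:R * f b <= b%:R * f a.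
Proof.
case/andP=> a0; elim: b => [|b IH]; first by lia.
rewrite leq_eqVlt => /orP[/eqP <- // | ab] bN.
have IHb := IH ab (ltnW bN).
have step := concave_chord_step bN; rewrite -natr1 in step *.
have b0 : 0 < b%:R :> R by rewrite ltr0n; lia.
have e1 := ler_wpM2l (ler0n R a) step.
have e2 := ler_wpM2l (ltW (ltr_wpDr ler01 b0)) IHb.
rewrite -(ler_pM2l b0); nra.
Qed.

End ConcaveSequence.

Lemma sum_sub_succ a m :
  (2 * \sum_(a <= t < a + m) (t - a.+1) = (m - 1) * (m - 2))%N.
Proof.
elim: m => [|m IH]; first by rewrite addn0 big_geq.
by rewrite addnS big_nat_recr ?leq_addr //= mulnDr IH; nia.
Qed.

Lemma sum_far_weights_le k x : (0 < k)%N -> (k + 2 <= x)%N ->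
  (3 * \sum_(k.+1 <= t < (k + k.+1).+1) (x.*2 + (t - x)) <= 4 * (2 * k + 1) * x)%N.
Proof.
move=> k0 kx.
have excess : (2 * \sum_(k.+1 <= t < (k + k.+1).+1) (t - x) <= k * (k - 1))%N.
  have -> : (k + k.+1).+1 = (k.+1 + k.+1)%N by lia.
  apply: leq_trans (_ : 2 * \sum_(k.+1 <= t < k.+1 + k.+1) (t - k.+2) <= _)%N.
    by rewrite leq_mul2l leq_sum // => t _; lia.
  by rewrite sum_sub_succ; nia.
rewrite big_split sum_nat_const_nat /=; nia.
Qed.

Section Doubling.
Variables (R : realType) (n : nat) (mu : nat -> R) (C : R).
Hypotheses (mu_gt0 : is_measure n mu) (C_le3 : C <= 3).
Hypothesis doubling0 :
  forall x, (1 <= x <= n)%N -> mu_ball n mu x 1 <= C * mu_ball n mu x 0.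
Local Notation F := (mu_pt n mu).

Lemma mu_pt_doubling0 y : (y < n)%N -> F y + F y.+1 + F y.+2 <= C * F y.+1.
Proof.
move=> yn; have := doubling0 (x := y.+1); rewrite mu_ball1 mu_ball0 subn1 /=.
by apply; lia.
Qed.

Lemma mu_pt_concave y : (y < n)%N -> F y + F y.+2 <= 2 * F y.+1.
Proof.
move=> /mu_pt_doubling0; have := mu_pt_ge0 mu_gt0 y.+1.
have : C * F y.+1 <= 3 * F y.+1 by rewrite ler_wpM2r ?mu_pt_ge0.
lra.
Qed.

Lemma mu_pt_chord a b : (0 < a <= b)%N -> a%:R * F b <= b%:R * F a.
Proof.
move=> ab; case: (leqP b n.+1) => bn.
  exact: (concave_chord mu_pt_concave (mu_pt_ge0 mu_gt0 0)).
by rewrite mu_pt_out ?mulr0 ?mulr_ge0 ?ler0n ?mu_pt_ge0 //; lia.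
Qed.

Hypothesis mu_sym : is_symmetric n mu.

Lemma mu_pt_incr_ge0 y : (y.*2 <= n)%N -> F y <= F y.+1.
Proof.
move=> yn; have := concave_incr_antitone mu_pt_concave (a := y) (b := n - y).
have -> : F (n - y)%N.+1 = F y by apply: (mu_pt_sym mu_sym); lia.
have -> : F (n - y)%N = F y.+1 by apply: (mu_pt_sym mu_sym); lia.
by move=> /(_ ltac:(lia)); lra.
Qed.

Lemma mu_pt_homo_half a b : (a <= b)%N -> (b.*2 <= n.+2)%N -> F a <= F b.
Proof.
elim: b => [|b IH]; first by rewrite leqn0 => /eqP ->.
rewrite leq_eqVlt => /orP[/eqP -> // | ab] bn.
by apply: le_trans (IH ab _) (mu_pt_incr_ge0 _); lia.
Qed.

Lemma mu_pt_mono a b : (a <= b)%N -> (a + b <= n.+1)%N -> F a <= F b.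
Proof.
move=> ab abn; case: (leqP b.*2 n.+2) => bn; first exact: mu_pt_homo_half.
by rewrite -(mu_pt_reflect mu_sym b); apply: mu_pt_homo_half; lia.
Qed.

Lemma mu_sphere_antitone x s t : (x.*2 <= n.+1)%N -> (s <= t <= x)%N ->
  mu_sphere n mu x t <= mu_sphere n mu x s.
Proof.
move=> xn; elim: t => [|t IH] /andP[st tx]; first by move: st; rewrite leqn0 => /eqP ->.
move: st; rewrite leq_eqVlt => /orP[/eqP -> // | st].
apply: le_trans (IH _); last by rewrite -ltnS st ltnW.
have := concave_incr_antitone mu_pt_concave (a := x - t.+1) (b := x + t).
have -> : (x - t.+1).+1 = (x - t)%N by lia.
rewrite /mu_sphere -addnS => /(_ ltac:(lia)); lra.
Qed.

Lemma mu_sphere_far_le x k t : (x.*2 <= n.+1)%N -> (0 < k <= x)%N -> (k <= t)%N ->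
  x.*2%:R * mu_sphere n mu x t <= (x.*2 + (t - x))%N%:R * mu_sphere n mu x k.
Proof.
move=> xn /andP[k0 kx] kt; case: (leqP t x) => tx.
  rewrite (_ : t - x = 0)%N ?addn0; last by lia.
  by rewrite ler_wpM2l ?ler0n ?mu_sphere_antitone ?kt.
have -> : (x.*2 + (t - x) = x + t)%N by lia.
apply: le_trans (_ : (x + t)%:R * F x.*2 <= _).
  by rewrite /mu_sphere (_ : x - t = 0)%N ?mu_pt0 ?add0r ?mu_pt_chord //; lia.
apply: ler_wpM2l; first by rewrite ler0n.
have -> : F x.*2 = mu_sphere n mu x x by rewrite /mu_sphere subnn mu_pt0 add0r addnn.
by apply: mu_sphere_antitone; rewrite // kx leqnn.
Qed.

Lemma mu_ball_doubling_interior x k : (x.*2 <= n.+1)%N -> (0 < k)%N -> (k + 2 <= x)%N ->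
  3 * mu_ball n mu x (2 * k + 1) <= 7 * mu_ball n mu x k.
Proof.
move=> xn k0 kx; set S := mu_sphere n mu x k.
set W := (\sum_(k.+1 <= t < (k + k.+1).+1) (x.*2 + (t - x)))%N.
have sphere_le : (2 * k%:R + 1) * S <= 2 * mu_ball n mu x k.
  by apply: mu_sphere_le_ball => t tk; apply: mu_sphere_antitone; rewrite // tk; lia.
have annulus : x.*2%:R * (mu_ball n mu x (2 * k + 1) - mu_ball n mu x k) <= W%:R * S.
  rewrite (_ : 2 * k + 1 = k + k.+1)%N; last by lia.
  rewrite mu_ball_addn addrAC subrr add0r natr_sum mulr_suml mulr_sumr.
  by apply: ler_sum_nat => t /andP[kt _]; apply: mu_sphere_far_le; lia.
have weights : 3 * W%:R <= 4 * (2 * k%:R + 1) * x%:R :> R.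
  by have := sum_far_weights_le k0 kx; rewrite -(ler_nat R) !(natrM, natrD); apply.
have S_ge0 : 0 <= S := mu_sphere_ge0 mu_gt0 x k.
have x_gt0 : 0 < x%:R :> R by rewrite ltr0n; lia.
rewrite -mul2n natrM in annulus.
have := ler_wpM2r S_ge0 weights.
rewrite -subr_ge0 -(pmulr_rge0 _ x_gt0); nra.
Qed.

Hypotheses (n_ge3 : (3 <= n)%N) (C_gt7_3 : 7 < 3 * C).
Hypothesis doubling_from1 :
  forall k, (k < n %/ 3)%N -> mu_ball n mu 1 (2 * k + 1) < C * mu_ball n mu 1 k.

Lemma mu_pt_tail_le j : (0 < j)%N -> (n <= 3 * j + 2)%N ->
  F (2 * j + 1) + F (2 * j + 2) <= C * F j.+1.
Proof.
move=> j0 nj; have Fj := mu_pt_ge0 mu_gt0 j.+1.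
have C_ge2 : 2 <= C by move: C_gt7_3; lra.
case: (ltnP n (2 * j + 1)) => jn.
  rewrite (mu_pt_out mu jn) (mu_pt_out mu (_ : n < 2 * j + 2)%N) ?addr0; last by lia.
  by apply: mulr_ge0; lra.
rewrite (@mu_pt_sym _ _ _ mu_sym (2 * j + 1) (n - 2 * j)); last by lia.
rewrite (@mu_pt_sym _ _ _ mu_sym (2 * j + 2) (n - 2 * j - 1)); last by lia.
case: (leqP (n - 2 * j) j.+1) => nj1.
  have le1 : F (n - 2 * j) <= F j.+1 by apply: mu_pt_mono; lia.
  have le2 : F (n - 2 * j - 1) <= F j.+1 by apply: mu_pt_mono; lia.
  have : 2 * F j.+1 <= C * F j.+1 by rewrite ler_wpM2r.
  lra.
have -> : (n - 2 * j = j.+2)%N by lia.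
have -> : (j.+2 - 1 = j.+1)%N by lia.
have := mu_pt_doubling0 (y := j) ltac:(lia); have := mu_pt_ge0 mu_gt0 j; lra.
Qed.

Lemma mu_ball_from1_doubling j : mu_ball n mu 1 (2 * j + 1) < C * mu_ball n mu 1 j.
Proof.
elim: j => [|j IH]; first by apply: doubling_from1; rewrite divn_gt0.
case: (ltnP j.+1 (n %/ 3)) => jn; first exact: doubling_from1.
have -> : (2 * j.+1 + 1 = (2 * j + 1).+2)%N by lia.
rewrite !mu_ball_from1S.
have := mu_pt_tail_le (j := j.+1) isT ltac:(lia).
have -> : (2 * j.+1 + 1 = (2 * j + 1).+2)%N by lia.
have -> : (2 * j.+1 + 2 = (2 * j + 1).+3)%N by lia.
lra.
Qed.

Lemma mu_ball_doubling_near_end x k : (0 < x <= k.+1)%N ->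
  mu_ball n mu x (2 * k + 1) < C * mu_ball n mu x k.
Proof.
move=> xk; rewrite (mu_ball_left n mu xk) mu_ball_left; last by lia.
apply: le_lt_trans (mu_ball_from1_doubling (x + k - 1)).
by apply: (mu_ball_mono mu_gt0); lia.
Qed.

Lemma mu_ball_doubling_half x k : (0 < x)%N -> (x.*2 <= n.+1)%N -> (0 < k)%N ->
  mu_ball n mu x (2 * k + 1) < C * mu_ball n mu x k.
Proof.
move=> x0 xn k0; case: (leqP x k.+1) => xk.
  by apply: mu_ball_doubling_near_end; rewrite x0.
have B_gt0 : 0 < mu_ball n mu x k by apply: (mu_ball_gt0 mu_gt0); lia.
have : 3 * mu_ball n mu x (2 * k + 1) <= 7 * mu_ball n mu x k.
  by apply: mu_ball_doubling_interior => //; lia.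
by move: C_gt7_3; nra.
Qed.

Lemma mu_ball_doubling_lt x k : (1 <= x <= n)%N -> (0 < k)%N ->
  mu_ball n mu x (2 * k + 1) < C * mu_ball n mu x k.
Proof.
move=> hx k0; case: (leqP x.*2 n.+1) => xn.
  by apply: mu_ball_doubling_half; rewrite ?(andP hx).1.
rewrite -!(mu_ball_reflect mu_sym _ hx).
apply: mu_ball_doubling_half => //; lia.
Qed.

End Doubling.

Section CountingMeasure.
Variables (R : realType) (n : nat).

Definition counting : nat -> R := fun=> 1.

Lemma counting_measure : is_measure n counting.
Proof. by move=> v _; rewrite ltr01. Qed.

Lemma counting_sphere_antitone x s t : (1 <= x <= n)%N -> (s <= t)%N ->
  mu_sphere n counting x t <= mu_sphere n counting x s.
Proof.
move=> hx st; rewrite /mu_sphere /mu_pt /counting.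
by apply: lerD; do 2 case: ifP => ?; rewrite ?lexx ?ler01 //; lia.
Qed.

Lemma counting_doubling x k : (1 <= x <= n)%N ->
  (2 * k%:R + 1) * mu_ball n counting x (2 * k + 1)
    <= (4 * k%:R + 3) * mu_ball n counting x k.
Proof.
move=> hx; set S := mu_sphere n counting x k.
have sphere_le : (2 * k%:R + 1) * S <= 2 * mu_ball n counting x k.
  by apply: mu_sphere_le_ball => t tk; apply: counting_sphere_antitone.
have annulus : mu_ball n counting x (2 * k + 1) <= mu_ball n counting x k + k.+1%:R * S.
  rewrite (_ : 2 * k + 1 = k + k.+1)%N; last by lia.
  rewrite mu_ball_addn lerD2l.
  apply: le_trans (ler_sum_nat (G := fun=> S) _) _.
    by move=> t /andP[kt _]; apply: counting_sphere_antitone; lia.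
  by rewrite sumr_const_nat mulr_natl; have -> : ((k + k.+1).+1 - k.+1 = k.+1)%N by lia.
have k_ge0 : 0 <= k%:R :> R by rewrite ler0n.
rewrite -natr1 in annulus; nra.
Qed.

Lemma counting_doubling_le3 x k : (1 <= x <= n)%N ->
  mu_ball n counting x (2 * k + 1) <= 3 * mu_ball n counting x k.
Proof.
move=> hx; have k_ge0 : 0 <= k%:R :> R by rewrite ler0n.
have B_ge0 := mu_ball_ge0 counting_measure x k.
by rewrite -(@ler_pM2l _ (2 * k%:R + 1)); [have := counting_doubling k hx; nra | lra].
Qed.

Lemma counting_doubling_7_3 x k : (1 <= x <= n)%N -> (0 < k)%N ->
  3 * mu_ball n counting x (2 * k + 1) <= 7 * mu_ball n counting x k.
Proof.
move=> hx k0; have k_ge1 : 1 <= k%:R :> R by rewrite ler1n.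
have B_ge0 := mu_ball_ge0 counting_measure x k.
by rewrite -(@ler_pM2l _ (2 * k%:R + 1)); [have := counting_doubling k hx; nra | lra].
Qed.

Lemma counting_ball_ge1 x k : (1 <= x <= n)%N -> 1 <= mu_ball n counting x k.
Proof.
move=> hx; apply: le_trans (mu_ball_mono counting_measure _ (leq0n k)).
by rewrite mu_ball0 mu_ptE.
Qed.

End CountingMeasure.

Section Ratios.
Local Open Scope classical_set_scope.
Variables (R : realType) (n : nat) (mu : nat -> R).
Hypothesis mu_gt0 : is_measure n mu.

Lemma C_mu_has_ubound : has_ubound [set c | exists x k : nat, (1 <= x <= n)%N /\
  c = mu_ball n mu x (2 * k + 1) / mu_ball n mu x k].
Proof.
have [m m0 mu_ge] := measure_lbound mu_gt0.
exists ((\sum_(1 <= y < n.+1) mu y) / m) => _ [x [k [hx ->]]].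
have ball_ge : m <= mu_ball n mu x k.
  by apply: le_trans (mu_ge x hx) _; rewrite -(mu_ptE mu hx) -mu_ball0 mu_ball_mono.
rewrite ler_pdivrMr ?mu_ball_gt0 // mulrAC ler_pdivlMr //.
by apply: ler_pM; rewrite ?mu_ball_ge0 ?mu_ball_le_total // ltW.
Qed.

Lemma C_mu_ub x k : (1 <= x <= n)%N ->
  mu_ball n mu x (2 * k + 1) <= C_mu n mu * mu_ball n mu x k.
Proof.
move=> hx; rewrite -ler_pdivrMr ?mu_ball_gt0 //.
by apply: (ub_le_sup C_mu_has_ubound); exists x, k.
Qed.

Lemma C_mu_le (M : R) : (1 <= n)%N ->
  (forall x k, (1 <= x <= n)%N -> mu_ball n mu x (2 * k + 1) <= M * mu_ball n mu x k) ->
  C_mu n mu <= M.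
Proof.
move=> n1 ub; apply: ge_sup.
  by exists (mu_ball n mu 1 1 / mu_ball n mu 1 0), 1%N, 0%N; rewrite n1.
by move=> _ [x [k [hx ->]]]; rewrite ler_pdivrMr ?mu_ball_gt0 ?ub.
Qed.

Lemma C0_mu_ub x : (1 <= x <= n)%N -> mu_ball n mu x 1 <= C0_mu n mu * mu x.
Proof.
move=> hx; rewrite -ler_pdivrMr ?mu_gt0 //; apply: ub_le_sup; last by exists x.
exists (C_mu n mu) => _ [y [hy ->]].
by rewrite ler_pdivrMr ?mu_gt0 // -(mu_ptE mu hy) -mu_ball0 (C_mu_ub 0).
Qed.

Lemma C0_mu_le (M : R) : (1 <= n)%N ->
  (forall x, (1 <= x <= n)%N -> mu_ball n mu x 1 <= M * mu x) -> C0_mu n mu <= M.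
Proof.
move=> n1 ub; apply: ge_sup; first by exists (mu_ball n mu 1 1 / mu 1), 1%N; rewrite n1.
by move=> _ [x [hx ->]]; rewrite ler_pdivrMr ?mu_gt0 ?ub.
Qed.

Lemma ceil_div_sub2_3 : (2 <= n)%N -> ceil_div (n - 2) 3 = (n %/ 3)%N.
Proof. by move=> n2; rewrite /ceil_div; congr (_ %/ _)%N; lia. Qed.

Lemma M1_ub k : (3 <= n)%N -> (k < n %/ 3)%N ->
  mu_ball n mu 1 (2 * k + 1) <= M1 n mu * mu_ball n mu 1 k.
Proof.
move=> n3 hk; rewrite -ler_pdivrMr ?mu_ball_gt0 ?(leq_trans _ n3) //.
apply: ub_le_sup; last by exists k; rewrite ceil_div_sub2_3 ?(leq_trans _ n3).
exists (C_mu n mu) => _ [j [_ ->]].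
by rewrite ler_pdivrMr ?mu_ball_gt0 ?C_mu_ub // ?(leq_trans _ n3).
Qed.

Lemma M1_le (M : R) : (3 <= n)%N ->
  (forall k, (k < n %/ 3)%N -> mu_ball n mu 1 (2 * k + 1) <= M * mu_ball n mu 1 k) ->
  M1 n mu <= M.
Proof.
move=> n3 ub; have n2 : (2 <= n)%N by apply: leq_trans n3.
apply: ge_sup.
  by exists (mu_ball n mu 1 1 / mu_ball n mu 1 0), 0%N; rewrite ceil_div_sub2_3 // divn_gt0.
move=> _ [k [hk ->]]; rewrite ceil_div_sub2_3 // in hk.
by rewrite ler_pdivrMr ?mu_ball_gt0 ?ub // ?(leq_trans _ n3).
Qed.

End Ratios.

Section OptimalConstantBounds.
Local Open Scope classical_set_scope.
Variables (R : realType) (n : nat).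
Hypothesis n_ge3 : (3 <= n)%N.

Lemma C_mu_lbound (mu : nat -> R) : is_measure n mu -> 12 <= 5 * C_mu n mu.
Proof.
move=> mu_gt0; set C := C_mu n mu.
have doubling0 x : (1 <= x <= n)%N ->
    mu_pt n mu (x - 1) + mu_pt n mu x + mu_pt n mu x.+1 <= C * mu_pt n mu x.
  by move=> hx; rewrite -mu_ball1 -mu_ball0 (C_mu_ub _ 0).
have h1 := doubling0 1%N ltac:(lia).
have h2 := doubling0 2%N ltac:(lia).
have h3 := doubling0 3%N ltac:(lia).
rewrite !subn1 /= mu_pt0 in h1 h2 h3.
have a0 : 0 < mu_pt n mu 1 by apply: (mu_pt_gt0 mu_gt0); lia.
have b0 : 0 < mu_pt n mu 2 by apply: (mu_pt_gt0 mu_gt0); lia.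
have c0 : 0 < mu_pt n mu 3 by apply: (mu_pt_gt0 mu_gt0); lia.
have d0 := mu_pt_ge0 mu_gt0 4.
(* With a, b, c the masses of 1, 2, 3, adding h1, h2, h3 with weights 5, 7, 5 gives
   12 a + 17 b + 12 c <= C (5 a + 7 b + 5 c), whence C >= 12/5. *)
nra.
Qed.

Lemma C_Ln_has_lbound :
  has_lbound [set c | exists mu : nat -> R, is_measure n mu /\ c = C_mu n mu].
Proof.
exists (12 / 5) => _ [mu [mu_gt0 ->]].
by rewrite ler_pdivrMr // mulrC C_mu_lbound.
Qed.

Lemma C_Ln_le_C_mu (mu : nat -> R) : is_measure n mu -> C_Ln n <= C_mu n mu.
Proof. by move=> mu_gt0; apply: (ge_inf C_Ln_has_lbound); exists mu. Qed.

Lemma C_Ln_lbound : 12 <= 5 * @C_Ln R n.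
Proof.
rewrite mulrC -ler_pdivrMr //; apply: lb_le_inf.
  by exists (C_mu n (counting R)), (counting R); split => //; apply: counting_measure.
by move=> _ [mu [mu_gt0 ->]]; rewrite ler_pdivrMr // mulrC C_mu_lbound.
Qed.

Lemma C_Ln_le3 : @C_Ln R n <= 3.
Proof.
apply: le_trans (C_Ln_le_C_mu (@counting_measure R n)) _.
apply: C_mu_le; [exact: counting_measure | lia | move=> x k hx].
exact: counting_doubling_le3.
Qed.

End OptimalConstantBounds.

Section Descent.
Variables (R : realType) (n : nat) (mu d : nat -> R) (C beta : R).
Hypotheses (n_ge1 : (1 <= n)%N) (mu_gt0 : is_measure n mu).
Hypotheses (C_gt1 : 1 < C) (beta_gt0 : 0 < beta).
Hypothesis doubling :
  forall x k, (1 <= x <= n)%N -> mu_ball n mu x (2 * k + 1) <= C * mu_ball n mu x k.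
Hypothesis descent : forall x k, (1 <= x <= n)%N -> (k < n)%N ->
  mu_ball n mu x (2 * k + 1) < C * mu_ball n mu x k \/
  mu_ball n d x (2 * k + 1) - C * mu_ball n d x k <= - beta.

Lemma C_mu_lt_of_defect (nu : nat -> R) (rho : R) : is_measure n nu -> 0 < rho ->
  (forall x k, (1 <= x <= n)%N -> (k < n)%N ->
    mu_ball n nu x (2 * k + 1) - C * mu_ball n nu x k <= - rho) ->
  C_mu n nu < C.
Proof.
move=> nu_gt0 rho_gt0 defect.
set T := \sum_(1 <= y < n.+1) nu y.
have T_gt0 : 0 < T.
  by rewrite /T -(mu_ball_total nu (x := 1) (r := n)) ?(mu_ball_gt0 nu_gt0) ?n_ge1.
set eta := Num.min (rho / T) (C - 1).
have eta_gt0 : 0 < eta by rewrite lt_min divr_gt0 //= subr_gt0.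
apply: le_lt_trans (_ : C - eta < C); last by rewrite ltrBlDr ltrDl.
apply: C_mu_le => // x k hx; case: (ltnP k n) => kn.
  have B_le : mu_ball n nu x k <= T by apply: mu_ball_le_total.
  have eta_le : eta <= rho / T by rewrite ge_min lexx.
  have : eta * mu_ball n nu x k <= rho.
    apply: le_trans (_ : rho / T * T <= rho); last by rewrite divfK ?gt_eqF.
    by apply: ler_pM => //; [apply: ltW | apply: mu_ball_ge0].
  by have := defect x k hx kn; lra.
rewrite !(mu_ball_total nu hx) // -/T; last by lia.
have eta_le : eta <= C - 1 by rewrite ge_min lexx orbT.
have : 0 <= (C - 1 - eta) * T by apply: mulr_ge0; lra.
lra.
Qed.

Lemma exists_better_measure : exists2 nu, is_measure n nu & C_mu n nu < C.
Proof.
have [m m_gt0 mu_ge] := measure_lbound mu_gt0.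
have [g g_gt0 gap] := finite_pos_lbound2
  (fun x k => C * mu_ball n mu x k - mu_ball n mu x (2 * k + 1)) n.+1 n.
set D := \sum_(1 <= y < n.+1) `|d y|.
have D_ge0 : 0 <= D by apply: sumr_ge0 => y _.
have C_ge0 : 0 <= C by move: C_gt1; lra.
have [eps eps_gt0 eps_small] :
    exists2 eps : R, 0 < eps & eps * ((1 + C) * D) <= Num.min m g / 2.
  by apply: pos_small_mul; [apply: mulr_ge0; lra | rewrite divr_gt0 // lt_min m_gt0].
have [min_m min_g] : Num.min m g <= m /\ Num.min m g <= g by split; rewrite ge_min lexx ?orbT.
have d_defect x k : eps * (mu_ball n d x (2 * k + 1) - C * mu_ball n d x k) <= g / 2.
  apply: le_trans (_ : eps * ((1 + C) * D) <= _); last lra.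
  by apply: ler_wpM2l; [exact: ltW | apply: doubling_defect_le].
have nu_gt0 : is_measure n (fun y => mu y + eps * d y).
  apply: perturb_is_measure mu_ge (ltW eps_gt0) _; rewrite -/D.
  have : eps * D <= eps * ((1 + C) * D) by apply: ler_wpM2l; [exact: ltW | nra].
  lra.
exists (fun y => mu y + eps * d y) => //.
set rho := Num.min (g / 2) (eps * beta).
apply: (C_mu_lt_of_defect nu_gt0 (rho := rho)); first by rewrite lt_min divr_gt0 ?mulr_gt0.
move=> x k hx kn; rewrite !mu_ball_lin.
have [rho_g rho_beta] : rho <= g / 2 /\ rho <= eps * beta by split; rewrite ge_min lexx ?orbT.
have := d_defect x k; have := doubling k hx.
case: (descent hx kn) => [strict | dec].
  have : g <= C * mu_ball n mu x k - mu_ball n mu x (2 * k + 1).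
    by apply: gap; rewrite ?subr_gt0 //; lia.
  lra.
have : eps * (mu_ball n d x (2 * k + 1) - C * mu_ball n d x k) <= eps * - beta.
  by apply: ler_wpM2l; first exact: ltW.
lra.
Qed.

End Descent.

Lemma neg_square_doubling0 (R : realType) n (C : R) x : (1 < x < n)%N ->
  let d y := - y%:R ^+ 2 in
  mu_ball n d x 1 - C * mu_ball n d x 0 = - 2 - (3 - C) * x%:R ^+ 2.
Proof.
move=> hx d; rewrite mu_ball1 mu_ball0 !mu_ptE /d; try lia.
rewrite -natr1 natrB; last lia.
by ring.
Qed.

Section OptimalMeasure.
Variables (R : realType) (n : nat) (mu : nat -> R).
Hypotheses (n_ge3 : (3 <= n)%N) (mu_gt0 : is_measure n mu).
Hypothesis mu_opt : C_mu n mu = C_Ln n.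
Local Notation C := (@C_Ln R n).

Let n_gt0 : (0 < n)%N := ltnW (ltnW n_ge3).

Lemma optimal_doubling x k : (1 <= x <= n)%N ->
  mu_ball n mu x (2 * k + 1) <= C * mu_ball n mu x k.
Proof. by rewrite -mu_opt; apply: C_mu_ub. Qed.

Lemma optimal_C_gt7_3 : 7 < 3 * C.
Proof. by have := C_Ln_lbound R n_ge3; lra. Qed.

Lemma optimal_no_descent (d : nat -> R) (beta : R) : 0 < beta ->
  ~ (forall x k, (1 <= x <= n)%N -> (k < n)%N ->
      mu_ball n mu x (2 * k + 1) < C * mu_ball n mu x k \/
      mu_ball n d x (2 * k + 1) - C * mu_ball n d x k <= - beta).
Proof.
move=> beta_gt0 descent.
have C_gt1 : 1 < C by have := optimal_C_gt7_3; lra.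
have [nu nu_gt0] := exists_better_measure n_gt0 mu_gt0 C_gt1 beta_gt0
  optimal_doubling descent.
by rewrite ltNge C_Ln_le_C_mu.
Qed.

Lemma C0_mu_optimal : C0_mu n mu = C.
Proof.
have C0_le : C0_mu n mu <= C.
  by apply: C0_mu_le => // x hx; rewrite -(mu_ptE mu hx) -mu_ball0 (optimal_doubling 0 hx).
apply/eqP; rewrite eq_le C0_le leNgt; apply/negP => C0_lt.
have C_gt7_3 := optimal_C_gt7_3.
apply: (optimal_no_descent (d := counting R) (beta := C - 7 / 3)); first lra.
move=> x [|k] hx _.
  left; apply: le_lt_trans (C0_mu_ub mu_gt0 hx) _.
  by rewrite mu_ball0 (mu_ptE mu hx) ltr_pM2r ?mu_gt0.
right; have := counting_doubling_7_3 R hx (ltn0Sn k).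
have := counting_ball_ge1 R k.+1 hx; nra.
Qed.

Hypothesis mu_sym : is_symmetric n mu.

Lemma M1_optimal : M1 n mu = C.
Proof.
have M1_le_C : M1 n mu <= C by apply: M1_le => // k _; apply: optimal_doubling; lia.
apply/eqP; rewrite eq_le M1_le_C leNgt; apply/negP => M1_lt.
have doubling_from1 k : (k < n %/ 3)%N ->
    mu_ball n mu 1 (2 * k + 1) < C * mu_ball n mu 1 k.
  move=> hk; apply: le_lt_trans (M1_ub mu_gt0 n_ge3 hk) _.
  by rewrite ltr_pM2r // (mu_ball_gt0 mu_gt0) // n_gt0.
have doubling_lt := mu_ball_doubling_lt mu_gt0 (C_Ln_le3 R n_ge3)
  (fun x => optimal_doubling 0) mu_sym n_ge3 optimal_C_gt7_3 doubling_from1.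
apply: (optimal_no_descent (d := fun y => - y%:R ^+ 2) (beta := 2)) => // x [|k] hx kn.
  case: (eqVneq x 1) => [-> | x_neq1]; first by left; apply: doubling_from1; rewrite divn_gt0.
  case: (eqVneq x n) => [-> | x_neqn].
    have ball_n r : mu_ball n mu n r = mu_ball n mu 1 r.
      by rewrite -(mu_ball_reflect mu_sym r (_ : 1 <= 1 <= n)%N) ?subSS ?subn0 ?n_gt0.
    by left; rewrite !ball_n; apply: doubling_from1; rewrite divn_gt0.
  right; rewrite neg_square_doubling0; last lia.
  by have := C_Ln_le3 R n_ge3; have := sqr_ge0 x%:R; nra.
by left; apply: doubling_lt.
Qed.

End OptimalMeasure.

Theorem proposition6p4 (R : realType) (n : nat) (mu : nat -> R) :
  (3 <= n)%N -> is_measure n mu -> is_symmetric n mu ->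
  C_mu n mu = @C_Ln R n ->
  M1 n mu = C0_mu n mu /\ C0_mu n mu = @C_Ln R n.
Proof.
move=> n_ge3 mu_gt0 mu_sym mu_opt.
by rewrite C0_mu_optimal // M1_optimal.
Qed.
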